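(* Let $A$ and $B$ be rings, $f : A \to B$ a ring homomorphism and $J$ a proper ideal of $B$. Assume that $f(\mathrm{Reg}(A)) \subseteq \mathrm{Reg}(B)$. If $A \bowtie^f J$ is a Prüfer ring, then $A$ is a Prüfer ring.
   Context: All rings are commutative with identity. For a ring homomorphism $f:A\to B$ and an ideal $J$ of $B$, $A \bowtie^f J := \{(a, f(a)+j) : a \in A, j \in J\}$, a subring of $A\times B$. $\mathrm{Reg}(R)$ is the set of regular elements (non-zero-divisors) of $R$. An ideal is regular if it contains a regular element. A ring $R$ is a Prüfer ring if every finitely generated regular ideal of $R$ is invertible. *)

From HB Require Import structures.
From mathcomp Require Import all_boot all_order all_algebra.
Set Implicit Arguments. Unset Strict Implicit. Unset Printing Implicit Defensive.
Import GRing.Theory.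
Local Open Scope ring_scope.

Definition regular (R : comPzRingType) (x : R) : Prop :=
  forall y : R, x * y = 0 -> y = 0.

Record ideal (R : comPzRingType) := Ideal {
  ideal_pred :> {pred R};
  ideal0 : 0 \in ideal_pred;
  idealD : forall x y, x \in ideal_pred -> y \in ideal_pred -> x + y \in ideal_pred;
  idealMl : forall r x, x \in ideal_pred -> r * x \in ideal_pred
}.

Definition is_proper_ideal (R : comPzRingType) (J : ideal R) : Prop := (1 : R) \notin J.

Definition gen_ideal (R : comPzRingType) (s : seq R) : R -> Prop :=
  fun x => exists c : 'I_(size s) -> R, x = \sum_(k < size s) c k * s`_k.

(* An ideal I (given as a predicate) is invertible: I (R : I) = R, where
   (R : I) = { u in Q(R) | u I \subseteq R }, Q(R) the total ring of fractions.
   Unfolded: an element u = a / s of Q(R) (s regular) lies in (R : I) iff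
   s divides a x for every x in I; as I (R : I) \subseteq R is an R-submodule,
   it equals R iff 1 = \sum_k i_k (a_k / s_k) with i_k in I, a_k / s_k in (R : I);
   each i_k a_k / s_k is the element r_k of R with s_k r_k = i_k a_k. *)
Definition invertible (R : comPzRingType) (I : R -> Prop) : Prop :=
  exists (n : nat) (i a s r : 'I_n -> R),
    (forall k, I (i k)) /\
    (forall k, regular (s k)) /\
    (forall k x, I x -> exists y, s k * y = a k * x) /\
    (forall k, s k * r k = i k * a k) /\
    \sum_(k < n) r k = 1.

Definition pruefer (R : comPzRingType) : Prop :=
  forall s : seq R, (exists x, gen_ideal s x /\ regular x) -> invertible (gen_ideal s).

(* Amalgamated algebra A ⋈^f J = {(a, f a + j)} as a subring of A * B. *)
Section Amalgamation.
Variables (A B : comPzRingType) (f : {rmorphism A -> B}) (J : ideal B).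

Definition amalg_pred : {pred A * B} := [pred x | x.2 - f x.1 \in J].

Record amalg := Amalg { amalg_val :> (A * B)%type; amalg_valP : amalg_pred amalg_val }.

HB.instance Definition _ := [isSub for amalg_val].
HB.instance Definition _ := [Choice of amalg by <:].

Lemma amalg_subring_closed : subring_closed amalg_pred.
Proof.
split.
- by rewrite inE /= rmorph1 subrr ideal0.
- move=> [a1 b1] [a2 b2]; rewrite !inE /= => H1 H2.
  have -> : b1 - b2 - f (a1 - a2) = (b1 - f a1) + (-1) * (b2 - f a2).
    by rewrite rmorphB mulN1r !opprB addrACA [in RHS]addrACA [- f a1 - _]addrC.
  by apply: idealD => //; apply: idealMl.
- move=> [a1 b1] [a2 b2]; rewrite !inE /= => H1 H2.
  have -> : b1 * b2 - f (a1 * a2) = b2 * (b1 - f a1) + f a1 * (b2 - f a2).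
    by rewrite rmorphM !mulrBr [f a1 * b2]mulrC addrA subrK [b2 * b1]mulrC.
  by apply: idealD; apply: idealMl.
Qed.

HB.instance Definition _ :=
  GRing.SubChoice_isSubComPzRing.Build (A * B)%type amalg_pred amalg
    amalg_subring_closed.

End Amalgamation.

(** The diagonal [a |-> (a, f a)] embeds [A] into [A ⋈^f J] as a ring with
    retraction the first projection, and it preserves regular elements since
    [f] does. If [s] generates an ideal of [A] containing a regular [x], the
    image of [s] generates a regular ideal of [A ⋈^f J], hence an invertible
    one, and because it contains [(x, f x)] its inverse can be written with
    fractions over the single denominator [(x, f x)]. The projection maps this
    ideal onto the ideal of [A] generated by [s], and maps the whole inversion
    identity to one over the regular denominator [x]. *)

From HB Require Import structures.
From mathcomp Require Import all_boot all_order all_algebra.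
From mathcomp Require Import ring.
Set Implicit Arguments. Unset Strict Implicit. Unset Printing Implicit Defensive.
Import GRing.Theory.
Local Open Scope ring_scope.

Lemma gen_idealE (R : comPzRingType) (s : seq R) x :
  gen_ideal s x <-> exists c : nat -> R, x = \sum_(k < size s) c k * s`_k.
Proof.
split=> [[c ->]|[c ->]]; last by exists (fun k => c k).
exists (fun n => if insub n is Some k then c k else 0).
by apply: eq_bigr => k _; rewrite valK.
Qed.

Lemma gen_ideal_map (R S : comPzRingType) (g : {rmorphism R -> S}) s z :
  gen_ideal s z -> gen_ideal (map g s) (g z).
Proof.
move/gen_idealE=> [c ->]; apply/gen_idealE; exists (g \o c).
rewrite rmorph_sum size_map; apply: eq_bigr => k _.
by rewrite rmorphM (nth_map 0) ?ltn_ord.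
Qed.

Lemma regular_mulI (R : comPzRingType) (x : R) : regular x -> injective ( *%R x).
Proof.
move=> regx y z E; apply/eqP; rewrite -subr_eq0; apply/eqP/regx.
by rewrite mulrBr E subrr.
Qed.

Definition invertible_with_den (R : comPzRingType) (I : R -> Prop) (d : R) :=
  exists n (i a r : 'I_n -> R),
    [/\ forall k, I (i k),
        forall k x, I x -> exists y, d * y = a k * x,
        forall k, d * r k = i k * a k &
        \sum_(k < n) r k = 1].

Lemma invertible_with_den_invertible (R : comPzRingType) (I : R -> Prop) x :
  regular x -> invertible_with_den I x -> invertible I.
Proof.
move=> regx [n [i [a [r [Ii Ia Er Sr]]]]].
by exists n, i, a, (fun => x), r.
Qed.

(* Since [x \in I], each [a k / s k] times [x] is an element [y k] of [R],
   so [a k / s k = y k / x]. *)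
Lemma invertible_with_den_of_invertible (R : comPzRingType) (I : R -> Prop) x :
  I x -> invertible I -> invertible_with_den I x.
Proof.
move=> Ix [n [i [a [s [r [Ii [regs [Ia [Er Sr]]]]]]]]].
have [y Ey] : exists y : 'I_n -> R, forall k, s k * y k = a k * x :=
  fin_all_exists (fun k => Ia k x Ix).
exists n, i, y, r; split=> // [k z Iz|k].
- have [w Ew] := Ia k z Iz; exists w; apply: (regular_mulI (regs k)).
  by rewrite mulrCA Ew [RHS]mulrA Ey; ring.
- apply: (regular_mulI (regs k)).
  by rewrite mulrCA Er [RHS]mulrCA Ey; ring.
Qed.

Lemma invertible_with_den_rmorph (R S : comPzRingType) (g : {rmorphism R -> S})
    (I : R -> Prop) (I' : S -> Prop) d :
  (forall z, I z -> I' (g z)) -> (forall z, I' z -> exists2 w, I w & g w = z) ->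
  invertible_with_den I d -> invertible_with_den I' (g d).
Proof.
move=> gI gI'_surj [n [i [a [r [Ii Ia Er Sr]]]]].
exists n, (g \o i), (g \o a), (g \o r); split=> [k|k z|k|] /=.
- exact: gI.
- move=> /gI'_surj[w /(Ia k)[y Ey] <-].
  by exists (g y); rewrite -!rmorphM Ey.
- by rewrite -!rmorphM Er.
- by rewrite -rmorph_sum Sr rmorph1.
Qed.

Lemma pruefer_retract (C A : comPzRingType) (p : {rmorphism C -> A})
    (e : {rmorphism A -> C}) :
  cancel e p -> (forall a, regular a -> regular (e a)) -> pruefer C -> pruefer A.
Proof.
move=> eK e_reg prC s [x [sx regx]].
have esx := gen_ideal_map e sx.
have regex := e_reg x regx.
have inv_es : invertible (gen_ideal (map e s)) by apply: prC; exists (e x).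
have den_es := invertible_with_den_of_invertible esx inv_es.
apply: (invertible_with_den_invertible regx).
rewrite -[x]eK; apply: (invertible_with_den_rmorph _ _ den_es) => z.
- by move/(gen_ideal_map p); rewrite (mapK eK).
- by move=> sz; exists (e z); [exact: gen_ideal_map | exact: eK].
Qed.

Section AmalgamatedDiagonal.
Variables (A B : comPzRingType) (f : {rmorphism A -> B}) (J : ideal B).

Lemma amalg_diag_subproof (a : A) : amalg_pred f J (a, f a).
Proof. by rewrite /amalg_pred /= subrr ideal0. Qed.

Definition amalg_diag (a : A) : amalg f J := Amalg (amalg_diag_subproof a).

Lemma amalg_diag_is_zmod_morphism : zmod_morphism amalg_diag.
Proof. by move=> a b; apply: val_inj; rewrite /= rmorphB. Qed.

Lemma amalg_diag_is_monoid_morphism : monoid_morphism amalg_diag.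
Proof. by split=> [|a b]; apply: val_inj; rewrite /= ?rmorph1 ?rmorphM. Qed.

HB.instance Definition _ :=
  GRing.isZmodMorphism.Build A (amalg f J) amalg_diag amalg_diag_is_zmod_morphism.
HB.instance Definition _ :=
  GRing.isMonoidMorphism.Build A (amalg f J) amalg_diag amalg_diag_is_monoid_morphism.

Lemma amalg_diagK : cancel amalg_diag (fst \o val).
Proof. by []. Qed.

Lemma regular_amalg (u : amalg f J) :
  regular (val u).1 -> regular (val u).2 -> regular u.
Proof.
move=> reg1 reg2 v /(congr1 val) [/reg1 v1 /reg2 v2].
by apply: val_inj; rewrite [val v]surjective_pairing v1 v2.
Qed.

End AmalgamatedDiagonal.

Theorem lemma2p5 (A B : comPzRingType) (f : {rmorphism A -> B}) (J : ideal B) :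
  is_proper_ideal J ->
  (forall a : A, regular a -> regular (f a)) ->
  pruefer (amalg f J) ->
  pruefer A.
Proof.
move=> _ f_reg.
apply: (pruefer_retract (p := fst \o val) (amalg_diagK f J)) => a rega.
by apply: regular_amalg => //=; apply: f_reg.
Qed.
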